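(* Let $\tau:\mathcal{D}_{\mathbf{V}_L}\to\mathcal{D}_{\mathbf{V}_H}$ be a constructive abstraction function w.r.t. clusterings $\mathbb{C}$ and $\mathbb{D}$. If $\mathbf{X}_L$ is a union of clusters in $\mathbb{C}$ (i.e., $\mathbf{X}_L=\bigcup_{\mathbf{C}_i\in\mathbb{C}'}\mathbf{C}_i$ for some $\mathbb{C}'\subseteq\mathbb{C}$), then for every $\mathbf{x}_L\in\mathcal{D}_{\mathbf{X}_L}$, $\omega_\tau(\mathbf{X}_L\leftarrow\mathbf{x}_L)$ exists and equals $\tau(\mathbf{X}_L)\leftarrow\tau(\mathbf{x}_L)$.
   Context: $\mathcal{D}_{\mathbf{X}}$ denotes the (Cartesian product) domain of a set of variables $\mathbf{X}$. An intervariable clustering of $\mathbf{V}_L$ is a set $\mathbb{C}=\{\mathbf{C}_1,\dots,\mathbf{C}_n\}$ forming a partition of a subset of $\mathbf{V}_L$; an intravariable clustering is $\mathbb{D}=\{\mathbb{D}_{\mathbf{C}_i}\}$ where $\mathbb{D}_{\mathbf{C}_i}=\{\mathcal{D}^1_{\mathbf{C}_i},\dots,\mathcal{D}^{m_i}_{\mathbf{C}_i}\}$ is a partition of $\mathcal{D}_{\mathbf{C}_i}$. A constructive abstraction function w.r.t. $\mathbb{C},\mathbb{D}$: $\mathbf{V}_H=\{V_{H,1},\dots,V_{H,n}\}$ in bijection with $\mathbb{C}$, $\mathcal{D}_{V_{H,i}}=\{v^1_{H,i},\dots,v^{m_i}_{H,i}\}$ in bijection with $\mathbb{D}_{\mathbf{C}_i}$,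 and $\tau(\mathbf{v}_L)=(\tau_{\mathbf{C}_i}(\mathbf{c}_i):\mathbf{C}_i\in\mathbb{C})$ with $\tau_{\mathbf{C}_i}(\mathbf{c}_i)=v^j_{H,i}$ iff $\mathbf{c}_i\in\mathcal{D}^j_{\mathbf{C}_i}$; for a union of clusters $\mathbf{W}_L$, $\tau(\mathbf{w}_L)=(\tau_{\mathbf{C}_i}(\mathbf{c}_i):\mathbf{C}_i\subseteq\mathbf{W}_L)$ and $\tau(\mathbf{W}_L)=\{V_{H,i}:\mathbf{C}_i\subseteq\mathbf{W}_L\}$. For a set of variables $\mathbf{V}$ and a value $\mathbf{x}$ of $\mathbf{X}\subseteq\mathbf{V}$, $\mathrm{Rst}(\mathbf{V},\mathbf{x})=\{\mathbf{v}\in\mathcal{D}_{\mathbf{V}}:\mathbf{v}\text{ is consistent with }\mathbf{x}\}$; for a set $\mathbf{T}\subseteq\mathcal{D}_{\mathbf{V}_L}$, $\tau(\mathbf{T})=\{\tau(\mathbf{v}):\mathbf{v}\in\mathbf{T}\}$. The map $\omega_\tau$ is defined by $\omega_\tau(\mathbf{X}_L\leftarrow\mathbf{x}_L)=(\mathbf{X}_H\leftarrow\mathbf{x}_H)$ whenever $\tau(\mathrm{Rst}(\mathbf{V}_L,\mathbf{x}_L))=\mathrm{Rst}(\mathbf{V}_H,\mathbf{x}_H)$ (it exists when such an intervention $\mathbf{X}_H\leftarrow\mathbf{x}_H$ exists). *)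

Set Implicit Arguments.

(* D_X : the Cartesian product domain of a set of variables X (X given as a
   predicate on the variable type V, D v the domain of variable v). *)
Definition dom (V : Type) (D : V -> Type) (X : V -> Prop) : Type :=
  forall v : V, X v -> D v.

Definition full (V : Type) (D : V -> Type) : Type := forall v : V, D v.

Definition Rst (V : Type) (D : V -> Type) (X : V -> Prop) (x : dom D X)
  : full D -> Prop :=
  fun w => forall (v : V) (h : X v), w v = x v h.

Definition restrict_full (V : Type) (D : V -> Type) (w : full D) (Y : V -> Prop)
  : dom D Y := fun v _ => w v.

Definition intervariable_clustering (VL I : Type) (C : I -> VL -> Prop) : Prop :=
  (forall i, exists v, C i v) /\
  (forall i j v, C i v -> C j v -> i = j).

(* The block index type B i is the high-level domain of V_{H,i}. *)
Definition intravariable_clustering (VL I : Type) (D : VL -> Type)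
  (C : I -> VL -> Prop) (B : I -> Type)
  (blk : forall i : I, B i -> dom D (C i) -> Prop) : Prop :=
  forall i : I,
    (forall j : B i, exists c, blk i j c) /\
    (forall (j k : B i) c, blk i j c -> blk i k c -> j = k) /\
    (forall c, exists j : B i, blk i j c).

Definition constructive_tauC (VL I : Type) (D : VL -> Type)
  (C : I -> VL -> Prop) (B : I -> Type)
  (blk : forall i : I, B i -> dom D (C i) -> Prop)
  (tauC : forall i : I, dom D (C i) -> B i) : Prop :=
  forall i c j, tauC i c = j <-> blk i j c.

Definition tau (VL I : Type) (D : VL -> Type) (C : I -> VL -> Prop)
  (B : I -> Type) (tauC : forall i : I, dom D (C i) -> B i)
  (w : full D) : full B :=
  fun i => tauC i (restrict_full w (C i)).

Definition tau_vars (VL I : Type) (C : I -> VL -> Prop) (W : VL -> Prop)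
  : I -> Prop := fun i => forall v, C i v -> W v.

Definition tau_val (VL I : Type) (D : VL -> Type) (C : I -> VL -> Prop)
  (B : I -> Type) (tauC : forall i : I, dom D (C i) -> B i)
  (W : VL -> Prop) (w : dom D W) : dom B (tau_vars C W) :=
  fun i (h : tau_vars C W i) => tauC i (fun v hv => w v (h v hv)).

(* omega_tau(X_L <- x_L) = (X_H <- x_H) holds iff
   tau(Rst(V_L, x_L)) = Rst(V_H, x_H) (equality of sets of assignments). *)
Definition omega_tau_is (VL I : Type) (D : VL -> Type) (B : I -> Type)
  (t : full D -> full B)
  (XL : VL -> Prop) (xL : dom D XL) (XH : I -> Prop) (xH : dom B XH) : Prop :=
  forall h : full B,
    (exists w : full D, Rst xL w /\ t w = h) <-> Rst xH h.

From Stdlib Require Import Classical ClassicalEpsilon FunctionalExtensionality ProofIrrelevance.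

(* The inclusion tau(Rst(V_L, x_L)) <= Rst(V_H, tau(x_L)) holds for any X_L.
   Conversely, a high-level state h agreeing with tau(x_L) on tau(X_L) is the
   image of a low-level state glued together from x_L on X_L and, on every other
   cluster, a preimage of h_i under tau_{C_i} (it exists since the blocks are
   nonempty).  Because X_L is a union of disjoint clusters, every cluster lies
   either inside X_L or outside it, so these pieces do not overlap. *)

Lemma dependent_choice {A : Type} {P : A -> Type} {R : forall a, P a -> Prop} :
  (forall a, exists p, R a p) -> exists f : forall a, P a, forall a, R a (f a).
Proof.
  intro HR.
  exists (fun a => proj1_sig (constructive_indefinite_description _ (HR a))).
  intro a. exact (proj2_sig (constructive_indefinite_description _ (HR a))).
Qed.

Lemma dom_ext {V : Type} {D : V -> Type} {X : V -> Prop} (f g : dom D X) :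
  (forall v h, f v h = g v h) -> f = g.
Proof.
  intro Hfg.
  apply functional_extensionality_dep; intro v.
  apply functional_extensionality_dep; intro h.
  apply Hfg.
Qed.

Section ConstructiveAbstraction.

Variables (VL I : Type) (D : VL -> Type) (C : I -> VL -> Prop).

Lemma cluster_inside_or_disjoint (XL : VL -> Prop) :
  intervariable_clustering C ->
  (exists C' : I -> Prop, forall v, XL v <-> exists i, C' i /\ C i v) ->
  forall i, tau_vars C XL i \/ (forall v, C i v -> ~ XL v).
Proof.
  intros [_ Hdisj] [C' HU] i.
  destruct (classic (exists v, C i v /\ XL v)) as [[v [hv hx]] | Hout].
  - left. intros u hu.
    destruct (proj1 (HU v) hx) as [j [hj hjv]].
    rewrite (Hdisj _ _ _ hjv hv) in hj.
    apply HU. exists i. split; assumption.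
  - right. intros v hv hx. apply Hout. exists v. split; assumption.
Qed.

Lemma glue_full (X : VL -> Prop) (x : dom D X) (c : forall i, dom D (C i)) :
  (forall v, inhabited (D v)) ->
  (forall i j v, C i v -> C j v -> i = j) ->
  exists w : full D,
    Rst x w /\ (forall i v (hv : C i v), ~ X v -> w v = c i v hv).
Proof.
  intros HD Hdisj.
  assert (Hpoint : forall v, exists d : D v,
    (forall hx : X v, d = x v hx) /\
    (forall i (hv : C i v), ~ X v -> d = c i v hv)).
  { intro v.
    destruct (classic (X v)) as [hx | hx].
    - exists (x v hx). split.
      + intro hx'. f_equal. apply proof_irrelevance.
      + intros i hv hnx. contradiction.
    - destruct (classic (exists i, C i v)) as [[i hi] | Hnone].
      + exists (c i v hi). split.
        * intro hx'. contradiction.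
        * intros j hj _. destruct (Hdisj _ _ _ hi hj).
          f_equal. apply proof_irrelevance.
      + destruct (HD v) as [d]. exists d. split.
        * intro hx'. contradiction.
        * intros i hi. exfalso. apply Hnone. exists i. exact hi. }
  destruct (dependent_choice Hpoint) as [w Hw].
  exists w. split.
  - intros v hx. apply Hw.
  - intros i v hv. apply Hw.
Qed.

Variables (B : I -> Type) (tauC : forall i : I, dom D (C i) -> B i).

Lemma constructive_tauC_surjective (blk : forall i : I, B i -> dom D (C i) -> Prop) :
  intravariable_clustering C B blk -> constructive_tauC C B blk tauC ->
  forall i b, exists c, tauC i c = b.
Proof.
  intros HB Htau i b.
  destruct (proj1 (HB i) b) as [c hc].
  exists c. apply Htau. exact hc.
Qed.

Lemma tau_Rst (XL : VL -> Prop) (xL : dom D XL) (w : full D) :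
  Rst xL w -> Rst (tau_val B tauC xL) (tau C B tauC w).
Proof.
  intros Hw i hi.
  unfold tau, tau_val. f_equal.
  apply dom_ext. intros v hv. apply Hw.
Qed.

Lemma Rst_tau_val_in_tau_image (XL : VL -> Prop) (xL : dom D XL) (h : full B) :
  (forall v, inhabited (D v)) ->
  (forall i j v, C i v -> C j v -> i = j) ->
  (forall i b, exists c, tauC i c = b) ->
  (forall i, tau_vars C XL i \/ (forall v, C i v -> ~ XL v)) ->
  Rst (tau_val B tauC xL) h -> exists w, Rst xL w /\ tau C B tauC w = h.
Proof.
  intros HD Hdisj Hsurj Hsplit Hh.
  destruct (dependent_choice (fun i => Hsurj i (h i))) as [c Hc].
  destruct (glue_full XL xL c HD Hdisj) as [w [Hw Hwc]].
  exists w. split; [exact Hw |].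
  apply functional_extensionality_dep. intro i.
  destruct (Hsplit i) as [hin | hout].
  - rewrite (Hh i hin). exact (tau_Rst XL xL w Hw i hin).
  - rewrite <- Hc. unfold tau. f_equal.
    apply dom_ext. intros v hv. apply Hwc. exact (hout v hv).
Qed.

End ConstructiveAbstraction.

Theorem lemma3 (VL I : Type) (D : VL -> Type) (C : I -> VL -> Prop)
  (B : I -> Type) (blk : forall i : I, B i -> dom D (C i) -> Prop)
  (tauC : forall i : I, dom D (C i) -> B i)
  (HD : forall v : VL, inhabited (D v))
  (HC : intervariable_clustering C)
  (HB : @intravariable_clustering VL I D C B blk)
  (Htau : @constructive_tauC VL I D C B blk tauC)
  (XL : VL -> Prop)
  (Hunion : exists C' : I -> Prop, forall v, XL v <-> exists i, C' i /\ C i v)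
  (xL : dom D XL) :
  @omega_tau_is VL I D B (@tau VL I D C B tauC) XL xL
    (tau_vars C XL) (@tau_val VL I D C B tauC XL xL).
Proof.
  intro h. split.
  - intros [w [Hw <-]]. apply tau_Rst. exact Hw.
  - apply Rst_tau_val_in_tau_image.
    + exact HD.
    + exact (proj2 HC).
    + eapply constructive_tauC_surjective; eassumption.
    + apply cluster_inside_or_disjoint; assumption.
Qed.
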